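(* For every nonempty graph $G$, the limit $\hat r_\infty(G)=\lim_{t\to\infty}\frac{\hat r(tK_2,G)}{t\,\hat r(K_2,G)}$ exists and \[\hat r_{\infty}(G)=\inf_{t\ge 1}\frac{\hat r(tK_2,G)}{t|E(G)|}.\] Moreover, $0\le \hat r_\infty(G)\le 1$, and $\hat r_\infty(G)=1$ if and only if $\hat r(tK_2,G)=t|E(G)|$ for every $t\ge 1$. In particular, for every integer $t\ge1$, $\hat r_\infty(G)\le \frac{\hat r(tK_2,G)}{t|E(G)|}$.
   Context: All graphs are finite and simple; a graph is nonempty if it has at least one edge. $tK_2$ denotes a matching with $t$ edges. For graphs $F,G,H$, $F\to(G,H)$ means every red--blue coloring of $E(F)$ contains a red copy of $G$ or a blue copy of $H$, and $\hat r(G,H)=\min\{|E(F)|:F\to(G,H)\}$. *)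

From HB Require Import structures.
From mathcomp Require Import all_boot all_order all_algebra.
From mathcomp Require Import all_classical all_reals all_analysis.

Set Implicit Arguments.
Unset Strict Implicit.
Unset Printing Implicit Defensive.

Record graph := Graph {
  gn : nat;
  gadj : rel 'I_gn;
  gadj_sym : symmetric gadj;
  gadj_irr : irreflexive gadj }.

Definition nedges (F : graph) : nat :=
  #|[set p : 'I_(gn F) * 'I_(gn F) | (p.1 < p.2)%N && gadj p.1 p.2]|.

(* A red-blue colouring of E(F): colour of edge {x,y} is col (min,max);
   true = red, false = blue.  Every colouring of the edges arises this way. *)
Definition coloring (F : graph) := {ffun 'I_(gn F) * 'I_(gn F) -> bool}.

Definition ecol (F : graph) (col : coloring F) (x y : 'I_(gn F)) : bool :=
  if (x < y)%N then col (x, y) else col (y, x).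

Definition has_mono_copy (F : graph) (col : coloring F) (b : bool) (G : graph) :=
  exists f : 'I_(gn G) -> 'I_(gn F), injective f /\
    forall u v, gadj u v -> gadj (f u) (f v) /\ ecol col (f u) (f v) = b.

Definition arrows (F G H : graph) : Prop :=
  forall col : coloring F, has_mono_copy col true G \/ has_mono_copy col false H.

Definition sr_pred (G H : graph) : pred nat :=
  fun m => `[< exists F : graph, arrows F G H /\ nedges F = m >].

(* size Ramsey number \hat r(G,H) = min {|E(F)| : F -> (G,H)}
   (such F always exist by Ramsey's theorem; the default 0 is never used). *)
Definition size_ramsey (G H : graph) : nat :=
  match pselect (exists m, sr_pred G H m) with
  | left ex => ex_minn ex
  | right _ => 0
  end.

(* t K_2 : the matching with t edges, on vertices 0..2t-1, edges {2i,2i+1}. *)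
Definition match_adj (t : nat) : rel 'I_(t.*2) :=
  fun i j => (i != j) && ((i : nat)./2 == (j : nat)./2).

Arguments match_adj t : clear implicits.

Lemma match_adj_sym (t : nat) : symmetric (match_adj t).
Proof. by move=> i j; rewrite /match_adj eq_sym [X in _ && X]eq_sym. Qed.

Lemma match_adj_irr (t : nat) : irreflexive (match_adj t).
Proof. by move=> i; rewrite /match_adj eqxx. Qed.

Definition matching (t : nat) : graph :=
  @Graph (t.*2) (match_adj t) (@match_adj_sym t) (@match_adj_irr t).

Definition K2 : graph := matching 1.

From mathcomp Require Import all_boot all_order all_algebra.
From mathcomp Require Import all_classical all_reals all_analysis.
From mathcomp Require Import zify lra.
Import Order.TTheory GRing.Theory Num.Theory.
Import numFieldNormedType.Exports.

(* The disjoint union of a graph arrowing (sK_2, G) and one arrowing (tK_2, G)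
   arrows ((s+t)K_2, G): a red matching in each half, or a blue G in one of
   them.  Hence t |-> \hat r(tK_2, G) is subadditive and, by Fekete's lemma,
   \hat r(tK_2, G) / t converges to its infimum.  Moreover
   \hat r(K_2, G) = |E(G)|: G arrows (K_2, G), and colouring all edges of a
   graph F -> (K_2, G) blue shows that F contains G.  So both normalisations
   agree and every ratio is at most 1. *)

Lemma ecolC (F : graph) (col : coloring F) x y : ecol col x y = ecol col y x.
Proof. by rewrite /ecol; case: ltngtP => // /val_inj ->. Qed.

Definition embeds (H G : graph) : Prop :=
  exists f : 'I_(gn H) -> 'I_(gn G), injective f /\ {homo f : u v / gadj u v}.

Lemma mono_copy_embeds (F G : graph) (col : coloring F) b :
  has_mono_copy col b G -> embeds G F.
Proof. by case=> f [f_inj f_hom]; exists f; split=> // u v /f_hom[]. Qed.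

Lemma embeds_mono_copy (F G H : graph) (col : coloring F) b :
  embeds H G -> has_mono_copy col b G -> has_mono_copy col b H.
Proof.
case=> g [g_inj g_hom] [f [f_inj f_hom]].
by exists (f \o g); split; [exact: inj_comp | move=> u v /g_hom/f_hom].
Qed.

Lemma nedges_embeds (H G : graph) : embeds H G -> (nedges H <= nedges G)%N.
Proof.
case=> f [f_inj f_hom].
pose sort2 (x y : 'I_(gn G)) := if (x < y)%N then (x, y) else (y, x).
pose g (p : 'I_(gn H) * 'I_(gn H)) := sort2 (f p.1) (f p.2).
have fne (u v : 'I_(gn H)) : (u < v)%N -> (f u : nat) != f v.
  by move=> uv; rewrite val_eqE (inj_eq f_inj) -val_eqE ltn_eqF.
rewrite /nedges -(card_in_imset (f := g)).
  apply/subset_leq_card/fintype.subsetP => _ /imsetP[[u v] + ->].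
  rewrite !inE /= => /andP[uv adj]; have := fne u v uv.
  rewrite /g /sort2 /=; case: (ltngtP (f u) (f v)) => // fuv _; rewrite ?inE /= fuv.
  - by rewrite f_hom.
  - by rewrite gadj_sym f_hom.
move=> [u v] [u' v']; rewrite !inE /= => /andP[uv _] /andP[uv' _].
rewrite /g /sort2 /=.
have := fne u v uv; have := fne u' v' uv'.
case: (ltngtP (f u) (f v)) => // h1 _; case: (ltngtP (f u') (f v')) => // h2 _;
  case=> /f_inj e1 /f_inj e2; subst => //; lia.
Qed.

Definition gunion_adj (F1 F2 : graph) : rel 'I_(gn F1 + gn F2) :=
  fun x y => match fintype.split x, fintype.split y with
  | inl a, inl b => gadj a b
  | inr a, inr b => gadj a b
  | _, _ => false
  end.

Lemma gunion_adj_sym F1 F2 : symmetric (gunion_adj F1 F2).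
Proof.
move=> x y; rewrite /gunion_adj.
by case: fintype.split => a; case: fintype.split => b //; exact: gadj_sym.
Qed.

Lemma gunion_adj_irr F1 F2 : irreflexive (gunion_adj F1 F2).
Proof. by move=> x; rewrite /gunion_adj; case: fintype.split => a; exact: gadj_irr. Qed.

Definition gunion (F1 F2 : graph) : graph :=
  @Graph (gn F1 + gn F2) (gunion_adj F1 F2) (@gunion_adj_sym F1 F2) (@gunion_adj_irr F1 F2).

Lemma gunion_adj_lshift F1 F2 a b :
  gunion_adj F1 F2 (lshift (gn F2) a) (lshift (gn F2) b) = gadj a b.
Proof. by rewrite /gunion_adj -!/(unsplit (inl _)) !unsplitK. Qed.

Lemma gunion_adj_rshift F1 F2 a b :
  gunion_adj F1 F2 (rshift (gn F1) a) (rshift (gn F1) b) = gadj a b.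
Proof. by rewrite /gunion_adj -!/(unsplit (inr _)) !unsplitK. Qed.

Lemma nedges_gunion F1 F2 : (nedges (gunion F1 F2) <= nedges F1 + nedges F2)%N.
Proof.
pose l2 (p : 'I_(gn F1) * 'I_(gn F1)) : 'I_(gn F1 + gn F2) * 'I_(gn F1 + gn F2) :=
  (lshift _ p.1, lshift _ p.2).
pose r2 (p : 'I_(gn F2) * 'I_(gn F2)) : 'I_(gn F1 + gn F2) * 'I_(gn F1 + gn F2) :=
  (rshift _ p.1, rshift _ p.2).
rewrite /nedges; apply: leq_trans (leq_add (leq_imset_card l2 _) (leq_imset_card r2 _)).
apply: leq_trans (leq_card_setU _ _); apply/subset_leq_card/fintype.subsetP.
move=> [x y]; rewrite inE /= -[x]splitK -[y]splitK /gunion_adj !unsplitK.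
case: (fintype.split x) => a; case: (fintype.split y) => b;
  rewrite ?andbF // => /andP[ab adj]; apply/setUP.
- by left; apply/imsetP; exists (a, b); rewrite // inE /= ab.
- right; apply/imsetP; exists (a, b) => //.
  by rewrite inE /= adj andbT -(ltn_add2l (gn F1)).
Qed.

Definition lcol {F1 F2} (col : coloring (gunion F1 F2)) : coloring F1 :=
  [ffun p => col (lshift _ p.1, lshift _ p.2)].
Definition rcol {F1 F2} (col : coloring (gunion F1 F2)) : coloring F2 :=
  [ffun p => col (rshift _ p.1, rshift _ p.2)].

Section GunionColoring.
Variables (F1 F2 : graph) (col : coloring (gunion F1 F2)).

Lemma ecol_lshift a b : ecol col (lshift (gn F2) a) (lshift (gn F2) b) = ecol (lcol col) a b.
Proof. by rewrite /ecol /lcol !ffunE. Qed.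

Lemma ecol_rshift a b : ecol col (rshift (gn F1) a) (rshift (gn F1) b) = ecol (rcol col) a b.
Proof. by rewrite /ecol /rcol !ffunE /= ltn_add2l. Qed.

Lemma mono_copy_lcol b G : has_mono_copy (lcol col) b G -> has_mono_copy col b G.
Proof.
case=> f [f_inj f_hom]; exists (lshift (gn F2) \o f); split.
  exact/inj_comp/f_inj/lshift_inj.
by move=> u v /f_hom; rewrite /= gunion_adj_lshift ecol_lshift.
Qed.

Lemma mono_copy_rcol b G : has_mono_copy (rcol col) b G -> has_mono_copy col b G.
Proof.
case=> f [f_inj f_hom]; exists (@rshift (gn F1) (gn F2) \o f); split.
  exact/inj_comp/f_inj/rshift_inj.
by move=> u v /f_hom; rewrite /= gunion_adj_rshift ecol_rshift.
Qed.

Lemma mono_copy_gunion b G1 G2 :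
  has_mono_copy (lcol col) b G1 -> has_mono_copy (rcol col) b G2 ->
  has_mono_copy col b (gunion G1 G2).
Proof.
case=> f1 [f1_inj f1_hom] [f2 [f2_inj f2_hom]].
pose f12 x := match x with inl a => inl (f1 a) | inr a => inr (f2 a) end.
have f12_inj : injective f12 by case=> x [] y //= [] => [/f1_inj|/f2_inj] ->.
exists (fun u => unsplit (f12 (fintype.split u))); split.
  exact/inj_comp/inj_comp/(can_inj splitK)/f12_inj/(can_inj unsplitK).
move=> u v; rewrite -[u]splitK -[v]splitK /= /gunion_adj !unsplitK.
case: (fintype.split u) => x; case: (fintype.split v) => y //=.
- by move/f1_hom; rewrite ecol_lshift.
- by move/f2_hom; rewrite ecol_rshift.
Qed.

End GunionColoring.

Lemma matching_addn_embeds s t :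
  embeds (matching (s + t)) (gunion (matching s) (matching t)).
Proof.
exists (cast_ord (doubleD s t)); split; first exact: cast_ord_inj.
move=> i j; rewrite /= /match_adj /gunion_adj.
case: (splitP (cast_ord _ i)) => a /= ia; case: (splitP (cast_ord _ j)) => b /= jb.
all: rewrite /match_adj -!val_eqE /= ia jb => /andP[/eqP ne /eqP half_eq].
all: have := ltn_ord a; have := ltn_ord b; rewrite /= => b_lt a_lt.
all: try (apply/andP; split; apply/eqP); lia.
Qed.

Lemma arrows_gunion {s t F1 F2 G} :
  arrows F1 (matching s) G -> arrows F2 (matching t) G ->
  arrows (gunion F1 F2) (matching (s + t)) G.
Proof.
move=> arrow1 arrow2 col.
have [red1|blue1] := arrow1 (lcol col); last by right; exact: mono_copy_lcol.
have [red2|blue2] := arrow2 (rcol col); last by right; exact: mono_copy_rcol.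
by left; apply: embeds_mono_copy (matching_addn_embeds s t) _; exact: mono_copy_gunion.
Qed.

Lemma arrows_matching0 F G : arrows F (matching 0) G.
Proof.
have no_vertex (i : 'I_(0.*2)) : False by case: i.
move=> col; left; exists (fun i => False_rect _ (no_vertex i)).
by split=> i; case: (no_vertex i).
Qed.

Lemma mono_copy_K2 {F} (col : coloring F) {u v} :
  gadj u v -> has_mono_copy col (ecol col u v) K2.
Proof.
move=> uv; have u_neq_v : u != v by apply: contraTneq uv => ->; rewrite gadj_irr.
exists (fun i : 'I_2 => if i == ord0 then u else v); split.
- move=> [[|[|i]] i_lt] [[|[|j]] j_lt] //= e;
    by [exact: val_inj | rewrite e eqxx in u_neq_v].
- by move=> [[|[|i]] i_lt] [[|[|j]] j_lt] //= _; rewrite gadj_sym ecolC.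
Qed.

Lemma arrows_K2 G : arrows G K2 G.
Proof.
move=> col; have [all_blue|] := boolP [forall u, forall v, gadj u v ==> ~~ ecol col u v].
  right; exists id; split=> // u v uv; split=> //; apply/negbTE.
  by move/forallP/(_ u)/forallP/(_ v): all_blue; rewrite uv.
move=> /forallPn[u /forallPn[v]]; rewrite negb_imply negbK => /andP[uv red].
by left; have := mono_copy_K2 col uv; rewrite red.
Qed.

Lemma size_ramsey_le {F H G} : arrows F H G -> (size_ramsey H G <= nedges F)%N.
Proof.
move=> arrow; rewrite /size_ramsey; case: pselect => [ex | []]; last first.
  by exists (nedges F); apply/asboolP; exists F.
by case: ex_minnP => m _; apply; apply/asboolP; exists F.
Qed.

Lemma size_ramsey_witness {H G} : (exists F, arrows F H G) ->
  exists2 F, arrows F H G & nedges F = size_ramsey H G.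
Proof.
move=> [F0 arrow0]; rewrite /size_ramsey; case: pselect => [ex | []]; last first.
  by exists (nedges F0); apply/asboolP; exists F0.
by case: ex_minnP => m /asboolP[F [arrow <-]] _; exists F.
Qed.

Lemma arrows_matching_exists t G : exists F, arrows F (matching t) G.
Proof.
elim: t => [|t [F arrow]]; first by exists G; exact: arrows_matching0.
by exists (gunion F G); rewrite -addn1; exact: arrows_gunion arrow (arrows_K2 G).
Qed.

Lemma size_ramsey_K2 G : size_ramsey K2 G = nedges G.
Proof.
apply/eqP; rewrite eqn_leq (size_ramsey_le (arrows_K2 G)) /=.
have [F arrow <-] := size_ramsey_witness (ex_intro (fun F => arrows F K2 G) G (arrows_K2 G)).
have [red|blue] := arrow [ffun=> false].
  case: red => f [_ /(_ ord0 (lift ord0 ord0) isT)[_]].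
  by rewrite /ecol !ffunE; case: ifP.
exact/nedges_embeds/mono_copy_embeds/blue.
Qed.

Lemma size_ramsey_matching_addn s t G :
  (size_ramsey (matching (s + t)) G <=
   size_ramsey (matching s) G + size_ramsey (matching t) G)%N.
Proof.
have [F1 arrow1 <-] := size_ramsey_witness (arrows_matching_exists s G).
have [F2 arrow2 <-] := size_ramsey_witness (arrows_matching_exists t G).
exact: leq_trans (size_ramsey_le (arrows_gunion arrow1 arrow2)) (nedges_gunion F1 F2).
Qed.

Lemma size_ramsey_matching0 G : size_ramsey (matching 0) G = 0%N.
Proof.
apply/eqP; rewrite -leqn0.
apply: leq_trans (size_ramsey_le (arrows_matching0 (matching 0) G)) _.
by rewrite /nedges leqn0 cards_eq0; apply/eqP/setP => -[[]].
Qed.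

Lemma size_ramsey_matching_le t G : (size_ramsey (matching t) G <= t * nedges G)%N.
Proof.
elim: t => [|t IH]; first by rewrite size_ramsey_matching0.
rewrite -addn1 mulnDl mul1n; apply: leq_trans (size_ramsey_matching_addn t 1 G) _.
exact/(leq_add IH)/eq_leq/size_ramsey_K2.
Qed.

Local Open Scope classical_set_scope.
Local Open Scope ring_scope.

Section Fekete.
Variables (R : realType) (a : nat -> R).
Hypothesis a_ge0 : forall n, 0 <= a n.
Hypothesis a_subadd : forall m n, a (m + n) <= a m + a n.

Lemma subadd_mul_addn k m r : a (k * m + r) <= k%:R * a m + a r.
Proof.
elim: k => [|k IH]; first by rewrite mul0n add0n mul0r add0r.
by rewrite mulSn -addnA (le_trans (a_subadd _ _)) // mulrSr; lra.
Qed.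

Lemma subadd_le_linear r : a r <= a 0 + r%:R * a 1.
Proof. by have := subadd_mul_addn r 1 0; rewrite muln1 addn0 addrC. Qed.

Lemma fekete_bound {m n} : (0 < m)%N -> (0 < n)%N ->
  a n / n%:R <= a m / m%:R + (a 0 + m%:R * a 1) / n%:R.
Proof.
move=> m_gt0 n_gt0.
have mR_gt0 : 0 < m%:R :> R by rewrite ltr0n.
have nR_gt0 : 0 < n%:R :> R by rewrite ltr0n.
have quot_le : (n %/ m)%:R * m%:R <= n%:R :> R by rewrite -natrM ler_nat leq_divM.
have rem_le : (n %% m)%:R <= m%:R :> R by rewrite ler_nat ltnW // ltn_mod.
have := subadd_mul_addn (n %/ m) m (n %% m); rewrite -divn_eq.
have := subadd_le_linear (n %% m).
set x := a m / m%:R.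
have -> : a m = x * m%:R by rewrite /x mulfVK ?gt_eqF.
have x_ge0 : 0 <= x by rewrite /x divr_ge0 ?a_ge0 ?ler0n.
have a1_ge0 := a_ge0 1.
move=> rem_bound quot_bound.
have a_n_le : a n <= x * n%:R + (a 0 + m%:R * a 1) by nra.
by rewrite ler_pdivrMr // mulrDl divfK ?gt_eqF.
Qed.

Theorem fekete :
  (fun n => a n / n%:R) @ \oo --> inf [set a n / n%:R | n in [set n | (0 < n)%N]].
Proof.
set S := [set _ | _ in _].
have S_lb : lbound S 0 by move=> _ [n _ <-]; rewrite divr_ge0 ?a_ge0.
have S_inf : has_inf S by split; [exists (a 1 / 1%:R), 1%N | exists 0].
apply/cvgrPdist_lt => eps eps_gt0.
have eps2_gt0 : 0 < eps / 2 by rewrite divr_gt0.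
have [_ [m m_gt0 <-] m_close] := inf_adherent eps2_gt0 S_inf.
set C := a 0 + m%:R * a 1.
have C_eps_ge0 : 0 <= C / (eps / 2).
  by rewrite /C divr_ge0 ?addr_ge0 ?mulr_ge0 ?a_ge0 ?ler0n ?ltW.
near=> n.
have n_gt0 : (0 < n)%N by near: n; exists 1%N.
have tail_small : C / n%:R < eps / 2.
  near: n; apply: filterS (nbhs_infty_gtr (C / (eps / 2))) => n bound.
  have nR_gt0 := le_lt_trans C_eps_ge0 bound.
  by rewrite ltr_pdivrMr // mulrC -ltr_pdivrMr.
have inf_le : inf S <= a n / n%:R by apply: ge_inf; [exists 0 | exists n].
have := fekete_bound m_gt0 n_gt0; rewrite -/C.
rewrite distrC ger0_norm ?subr_ge0 //; lra.
Unshelve. all: by end_near.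
Qed.

End Fekete.

Lemma inf_eq_ubP (R : realType) (S : set R) c :
  has_lbound S -> ubound S c -> S !=set0 -> inf S = c <-> S `<=` [set c].
Proof.
move=> S_lb S_ub [x0 Sx0]; split=> [inf_c x Sx | S_c].
  by apply/le_anti; rewrite S_ub //= -{1}inf_c; exact: ge_inf.
apply/le_anti/andP; split; first by rewrite -(S_c x0 Sx0); exact: ge_inf.
by apply: lb_le_inf; [exists x0 | move=> x /S_c ->].
Qed.

Definition matching_ratio (R : realType) (G : graph) (t : nat) : R :=
  (size_ramsey (matching t) G)%:R / (t * nedges G)%:R.

Section MatchingRatio.
Variables (R : realType) (G : graph).
Hypothesis E_gt0 : (0 < nedges G)%N.

Lemma matching_ratio_ge0 t : 0 <= matching_ratio R G t.
Proof. by rewrite divr_ge0. Qed.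

Lemma matching_ratio_le1 t : (0 < t)%N -> matching_ratio R G t <= 1.
Proof.
move=> t_gt0; rewrite ler_pdivrMr ?ltr0n ?muln_gt0 ?t_gt0 // mul1r ler_nat.
exact: size_ramsey_matching_le.
Qed.

Lemma matching_ratio_eq1 t : (0 < t)%N ->
  matching_ratio R G t = 1 <-> size_ramsey (matching t) G = (t * nedges G)%N.
Proof.
move=> t_gt0; split=> [/divr1_eq/eqP | sr_eq]; first by rewrite eqr_nat => /eqP.
by rewrite /matching_ratio sr_eq divff // pnatr_eq0 -lt0n muln_gt0 t_gt0.
Qed.

Lemma matching_ratio_cvg :
  matching_ratio R G @ \oo -->
    inf [set matching_ratio R G t | t in [set t | (0 < t)%N]].
Proof.
pose a t : R := (size_ramsey (matching t) G)%:R / (nedges G)%:R.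
have -> : matching_ratio R G = fun t => a t / t%:R.
  by apply/funext => t; rewrite /matching_ratio /a natrM invfM mulrA mulrAC.
apply: fekete => [t | s t]; first by rewrite divr_ge0.
by rewrite /a -mulrDl ler_wpM2r ?invr_ge0 // -natrD ler_nat size_ramsey_matching_addn.
Qed.

End MatchingRatio.

Theorem corollary2p4 (R : realType) (G : graph) :
  (0 < nedges G)%N ->
  let u : nat -> R := fun t =>
    (size_ramsey (matching t) G)%:R / (t%:R * (size_ramsey K2 G)%:R) in
  let q : nat -> R := fun t =>
    (size_ramsey (matching t) G)%:R / (t * nedges G)%:R in
  let rinf : R := lim (u @ \oo) in
  [/\ cvg (u @ \oo),
      rinf = inf [set q t | t in [set t : nat | (1 <= t)%N]],
      0 <= rinf /\ rinf <= 1,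
      rinf = 1 <-> (forall t : nat, (1 <= t)%N ->
                      size_ramsey (matching t) G = (t * nedges G)%N)
    & forall t : nat, (1 <= t)%N -> rinf <= q t].
Proof.
move=> E_gt0 u q rinf.
have uq : u = q by apply/funext => t; rewrite /u /q size_ramsey_K2 natrM.
set S := [set q t | t in _].
have S_lb : lbound S 0 by move=> _ [t _ <-]; exact: matching_ratio_ge0.
have S_ub : ubound S 1 by move=> _ [t t_gt0 <-]; exact: matching_ratio_le1.
have S1 : S 1 by exists 1%N => //; apply/matching_ratio_eq1; rewrite ?mul1n ?size_ramsey_K2.
have rinfE : rinf = inf S by rewrite /rinf uq; exact/cvg_lim/matching_ratio_cvg.
have rinf_le t : (1 <= t)%N -> rinf <= q t.
  by move=> t_gt0; rewrite rinfE; apply: ge_inf; [exists 0 | exists t].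
split=> //.
- by rewrite uq; exact/cvgP/matching_ratio_cvg.
- by rewrite rinfE; split; [apply: lb_le_inf; first exists 1 | apply: ge_inf; first exists 0].
rewrite rinfE inf_eq_ubP; [|by exists 0 | by [] | by exists 1].
split=> [S_eq1 t t_gt0 | sr_eq _ [t t_gt0 <-]].
- by apply/(matching_ratio_eq1 R) => //; apply: S_eq1; exists t.
- by apply/matching_ratio_eq1 => //; exact: sr_eq.
Qed.
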